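(* Let $m_1,m_2,m_3>0$, let $\alpha_{ij},\beta_{ij}>0$ for $1\le i<j\le 3$, and let $a,b\in\mathbb{R}$ with $4<a<b-1$. Consider the Hamiltonian system $\dot{\mathbf q}=M^{-1}\mathbf p$, $\dot{\mathbf p}=-\nabla W(\mathbf q)$ on $(\mathbb{R}^3\setminus\Delta)\times\mathbb{R}^3$. Then no solution of this system has a singularity. That is, if $(\mathbf q(t),\mathbf p(t))$ is a solution with initial data in $(\mathbb{R}^3\setminus\Delta)\times\mathbb{R}^3$, defined on a maximal interval $[0,t^* )$, then $t^*=\infty$. In particular, no double or triple collisions occur in finite time. The analogous statement holds for backward time.
   Context: Three point masses $m_1,m_2,m_3$ move on a line with positions $\mathbf q=(q_1,q_2,q_3)$ and momenta $\mathbf p=(p_1,p_2,p_3)$. Let $M=\mathrm{diag}(m_1,m_2,m_3)$. The Hamiltonian is $H(\mathbf q,\mathbf p)=\tfrac12\mathbf p^TM^{-1}\mathbf p+W(\mathbf q)$, where $W=-U+V$ with $$U(\mathbf q)=\sum_{1\le i<j\le3}\frac{\alpha_{ij}}{|q_i-q_j|^{a}},\qquad V(\mathbf q)=\sum_{1\le i<j\le3}\frac{\beta_{ij}}{|q_i-q_j|^{b}}.$$ The collision set is $\Delta=\{\mathbf q\in\mathbb{R}^3: q_1=q_2\text{ or }q_2=q_3\text{ or }q_1=q_3\}$. *)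

From Stdlib Require Import Reals.
Open Scope R_scope.

Definition pairpot (c12 c13 c23 e : R) (x1 x2 x3 : R) : R :=
  c12 / Rpower (Rabs (x1 - x2)) e
  + c13 / Rpower (Rabs (x1 - x3)) e
  + c23 / Rpower (Rabs (x2 - x3)) e.

Definition Upot (al12 al13 al23 a : R) (x1 x2 x3 : R) : R :=
  pairpot al12 al13 al23 a x1 x2 x3.

Definition Vpot (be12 be13 be23 b : R) (x1 x2 x3 : R) : R :=
  pairpot be12 be13 be23 b x1 x2 x3.

Definition Wpot (al12 al13 al23 a be12 be13 be23 b : R) (x1 x2 x3 : R) : R :=
  - Upot al12 al13 al23 a x1 x2 x3 + Vpot be12 be13 be23 b x1 x2 x3.

Definition noncollision (x1 x2 x3 : R) : Prop :=
  x1 <> x2 /\ x2 <> x3 /\ x1 <> x3.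

(* (q,p) = (q1,q2,q3,p1,p2,p3) solves  q' = M^{-1} p,  p' = - grad W(q)
   on the open time interval (t0,t1), staying in (R^3 \ Delta) x R^3.
   The gradient is expressed through the partial derivatives of W. *)
Definition is_solution (m1 m2 m3 : R) (W : R -> R -> R -> R)
  (q1 q2 q3 p1 p2 p3 : R -> R) (t0 t1 : R) : Prop :=
  forall t, t0 < t < t1 ->
    noncollision (q1 t) (q2 t) (q3 t) /\
    derivable_pt_lim q1 t (p1 t / m1) /\
    derivable_pt_lim q2 t (p2 t / m2) /\
    derivable_pt_lim q3 t (p3 t / m3) /\
    (exists v, derivable_pt_lim p1 t v /\
       derivable_pt_lim (fun x => W x (q2 t) (q3 t)) (q1 t) (- v)) /\
    (exists v, derivable_pt_lim p2 t v /\
       derivable_pt_lim (fun x => W (q1 t) x (q3 t)) (q2 t) (- v)) /\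
    (exists v, derivable_pt_lim p3 t v /\
       derivable_pt_lim (fun x => W (q1 t) (q2 t) x) (q3 t) (- v)).

Definition agree_on (q1 q2 q3 p1 p2 p3 q1' q2' q3' p1' p2' p3' : R -> R)
  (t0 t1 : R) : Prop :=
  forall t, t0 < t < t1 ->
    q1' t = q1 t /\ q2' t = q2 t /\ q3' t = q3 t /\
    p1' t = p1 t /\ p2' t = p2 t /\ p3' t = p3 t.

From Stdlib Require Import Reals Lra Lia Psatz ClassicalEpsilon.
Open Scope R_scope.

(* Each pair term phi(x) = -al/|x|^a + be/|x|^b is bounded below and
   tends to +oo at 0.  Along a solution on a bounded interval (t0,t1) the energy
   is conserved, so every pair term and every kinetic term stays bounded: the
   bodies remain del-apart and the momenta remain <= P (a priori bounds).  Near
   such states the Hamiltonian field is bounded and Lipschitz with constants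
   depending only on (del, P), so Picard-Lindelof yields local solutions on a
   time step h(del, P) independent of the starting time.  Starting one within
   h/2 of t1 and gluing it to the given solution (they agree by uniqueness)
   extends the solution past t1; time reversal gives the backward statement. *)

(** * Elementary real analysis *)

Lemma Rabs_le_between (x y : R) : Rabs x <= y -> - y <= x <= y.
Proof. unfold Rabs; destruct Rcase_abs; lra. Qed.

Lemma mean_value_bound (f f' : R -> R) (a b x y K : R) :
  a <= x <= b -> a <= y <= b ->
  (forall c, a <= c <= b -> derivable_pt_lim f c (f' c)) ->
  (forall c, a <= c <= b -> Rabs (f' c) <= K) ->
  Rabs (f y - f x) <= K * Rabs (y - x).
Proof.
  intros Hx Hy Hd HK.
  assert (Hin : forall c, Rmin x y <= c <= Rmax x y -> a <= c <= b).
  { intros c [H1 H2]. pose proof (Rmin_glb x y a ltac:(lra) ltac:(lra)).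
    pose proof (Rmax_lub x y b ltac:(lra) ltac:(lra)). lra. }
  destruct (MVT_abs f f' x y) as [c [-> Hc]]; [intros c Hc; apply Hd, Hin, Hc |].
  apply Rmult_le_compat_r; [apply Rabs_pos | apply HK, Hin, Hc].
Qed.

Lemma null_derivative_constant (f : R -> R) (t0 t1 t t' : R) :
  (forall c, t0 < c < t1 -> derivable_pt_lim f c 0) ->
  t0 < t < t1 -> t0 < t' < t1 -> f t = f t'.
Proof.
  intros Hd Ht Ht'.
  assert (H : Rabs (f t - f t') <= 0 * Rabs (t - t')).
  { apply (mean_value_bound f (fun _ => 0) (Rmin t t') (Rmax t t')).
    - split; [apply Rmin_r | apply Rmax_r].
    - split; [apply Rmin_l | apply Rmax_l].
    - intros c Hc. apply Hd. unfold Rmin, Rmax in Hc; destruct Rle_dec; lra.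
    - intros _ _. rewrite Rabs_R0; lra. }
  rewrite Rmult_0_l in H. unfold Rabs in H; destruct Rcase_abs in H; lra.
Qed.

Lemma derivable_pt_lim_affine_arg (f : R -> R) (k c x l : R) :
  derivable_pt_lim f (k * x + c) l ->
  derivable_pt_lim (fun y => f (k * y + c)) x (k * l).
Proof.
  intros Hf. rewrite Rmult_comm.
  apply (derivable_pt_lim_comp (fun y => k * y + c) f); [| exact Hf].
  apply (derivable_pt_lim_ext (plus_fct (mult_real_fct k id) (fct_cte c))).
  { intros; unfold plus_fct, mult_real_fct, fct_cte, id; ring. }
  replace k with (k * 1 + 0) at 2 by ring.
  apply derivable_pt_lim_plus;
    [apply derivable_pt_lim_scal, derivable_pt_lim_id | apply derivable_pt_lim_const].
Qed.

Lemma derivable_pt_lim_add (f g : R -> R) (x l1 l2 : R) :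
  derivable_pt_lim f x l1 -> derivable_pt_lim g x l2 ->
  derivable_pt_lim (fun y => f y + g y) x (l1 + l2).
Proof. intros H1 H2. exact (derivable_pt_lim_plus f g x _ _ H1 H2). Qed.

Lemma derivable_pt_lim_square_div (f : R -> R) (t l k : R) : derivable_pt_lim f t l ->
  derivable_pt_lim (fun s => f s * f s / k) t (2 * f t * l / k).
Proof.
  intros H.
  replace (2 * f t * l / k) with ((l * f t + f t * l) / k) by (unfold Rdiv; ring).
  exact (derivable_pt_lim_div_scal (mult_fct f f) t _ k (derivable_pt_lim_mult f f t l l H H)).
Qed.

Lemma derivable_pt_lim_offset (f : R -> R) (x l a b : R) :
  derivable_pt_lim f x l -> derivable_pt_lim (fun s => a + (f s - b)) x l.
Proof.
  intros Hf eps Heps. destruct (Hf eps Heps) as [del Hdel]. exists del.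
  intros h Hh0 Hh. replace ((a + (f (x + h) - b) - (a + (f x - b))) / h)
    with ((f (x + h) - f x) / h) by (field; auto). auto.
Qed.

Lemma continuity_pt_metric (f : R -> R) (x : R) :
  continuity_pt f x <-> forall eps, 0 < eps ->
    exists del, 0 < del /\ forall y, Rabs (y - x) < del -> Rabs (f y - f x) < eps.
Proof.
  split.
  - intros Hc eps Heps. destruct (Hc eps Heps) as [del [Hd H]]. exists del; split; auto.
    intros y Hy. destruct (Req_dec y x) as [->|Hne].
    + rewrite Rminus_diag, Rabs_R0; auto.
    + apply (H y). split; [split; [exact I | auto] | exact Hy].
  - intros H eps Heps. destruct (H eps Heps) as [del [Hd Hy]]. exists del; split; auto.
    intros y [_ Hy2]. apply Hy, Hy2.
Qed.

(* A classical choice of the limit of a sequence (0 if it diverges). *)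
Definition seq_limit (u : nat -> R) : R :=
  match excluded_middle_informative (exists l, Un_cv u l) with
  | left H => proj1_sig (constructive_indefinite_description _ H)
  | right _ => 0 end.

Lemma seq_limit_spec (u : nat -> R) : (exists l, Un_cv u l) -> Un_cv u (seq_limit u).
Proof.
  intros H. unfold seq_limit. destruct excluded_middle_informative as [H'|H'].
  - destruct constructive_indefinite_description; simpl; auto.
  - contradiction.
Qed.

Lemma limit_dist_bound (u : nat -> R) (l a B : R) (k : nat) :
  Un_cv u l -> (forall m, (k <= m)%nat -> Rabs (u m - a) <= B) -> Rabs (l - a) <= B.
Proof.
  intros Hu Hb. destruct (Rle_dec (Rabs (l - a)) B) as [|Hn]; auto. exfalso.
  destruct (Hu (Rabs (l - a) - B)) as [N HN]; [lra|].
  specialize (HN (Nat.max N k) ltac:(lia)). specialize (Hb (Nat.max N k) ltac:(lia)).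
  unfold R_dist in HN. rewrite Rabs_minus_sym in HN.
  pose proof (Rabs_triang (l - u (Nat.max N k)) (u (Nat.max N k) - a)).
  replace (l - u (Nat.max N k) + (u (Nat.max N k) - a)) with (l - a) in H by ring. lra.
Qed.

Lemma geometric_small (C eps : R) : 0 <= C -> 0 < eps ->
  exists N, forall n, (N <= n)%nat -> C * (/2)^n < eps.
Proof.
  intros HC He.
  destruct (pow_lt_1_zero (/2) ltac:(rewrite Rabs_right; lra) (eps / (C + 1))) as [N HN].
  { apply Rdiv_lt_0_compat; lra. }
  exists N. intros n Hn. specialize (HN n Hn).
  rewrite Rabs_right in HN by (apply Rle_ge, pow_le; lra).
  pose proof (pow_le (/2) n ltac:(lra)).
  assert ((C + 1) * (/2)^n < (C + 1) * (eps / (C + 1))) by (apply Rmult_lt_compat_l; lra).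
  replace ((C + 1) * (eps / (C + 1))) with eps in H0 by (field; lra). nra.
Qed.

Lemma zero_of_geometric_bound (x C : R) : (forall k, Rabs x <= C * (/2)^k) -> x = 0.
Proof.
  intros H. destruct (Req_dec x 0) as [|Hn]; auto. exfalso.
  assert (HC : 0 <= C) by (specialize (H O); pose proof (Rabs_pos x); simpl in H; lra).
  destruct (geometric_small C (Rabs x) HC (Rabs_pos_lt x Hn)) as [N HN].
  specialize (HN N (le_n N)). specialize (H N). lra.
Qed.

Definition antiderivative (g : R -> R) (a b : R) : R -> R :=
  match excluded_middle_informative
          (a <= b /\ forall x, a <= x <= b -> continuity_pt g x) with
  | left H => proj1_sig (@RiemannInt_P30 g a b (proj1 H) (proj2 H))
  | right _ => fun _ => 0 end.

Lemma antiderivative_spec (g : R -> R) (a b : R) : a <= b ->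
  (forall x, a <= x <= b -> continuity_pt g x) ->
  forall x, a <= x <= b -> derivable_pt_lim (antiderivative g a b) x (g x).
Proof.
  intros Hab Hc x Hx. unfold antiderivative. destruct excluded_middle_informative as [H|H].
  - destruct (@RiemannInt_P30 g a b _ _) as [G HG0]. simpl. destruct HG0 as [HG _].
    destruct (HG x Hx) as [pr Hpr]. rewrite Hpr. destruct pr as [l Hl]. exact Hl.
  - exfalso; auto.
Qed.

(** * Local existence for ODE systems with a bounded Lipschitz field *)

(* Vectors of R^n are represented by functions nat -> R read at indices < n;
   a field G is L-Lipschitz for the sup-norm on these indices. *)
Definition lipschitz_field (n : nat) (G : (nat -> R) -> nat -> R) (L : R) : Prop :=
  forall u v B, (forall j, (j < n)%nat -> Rabs (u j - v j) <= B) ->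
    forall i, (i < n)%nat -> Rabs (G u i - G v i) <= L * B.

Definition clamp (c h t : R) : R := Rmax (c - h) (Rmin (c + h) t).

Lemma clamp_in (c h t : R) : 0 <= h -> c - h <= clamp c h t <= c + h.
Proof. intros; unfold clamp, Rmax, Rmin; repeat destruct Rle_dec; lra. Qed.

Lemma clamp_id (c h t : R) : c - h <= t <= c + h -> clamp c h t = t.
Proof. intros; unfold clamp, Rmax, Rmin; repeat destruct Rle_dec; lra. Qed.

Lemma clamp_dist (c h x y : R) : 0 <= h -> Rabs (clamp c h x - clamp c h y) <= Rabs (x - y).
Proof.
  intros; unfold clamp, Rmax, Rmin; repeat destruct Rle_dec; unfold Rabs;
  repeat destruct Rcase_abs; lra.
Qed.

Lemma common_modulus (n : nat) (u : R -> nat -> R) (t : R) :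
  (forall j, (j < n)%nat -> continuity_pt (fun s => u s j) t) ->
  forall eps, 0 < eps -> exists del, 0 < del /\ forall s, Rabs (s - t) < del ->
    forall j, (j < n)%nat -> Rabs (u s j - u t j) < eps.
Proof.
  induction n; intros Hc eps Heps.
  - exists 1; split; [lra|]; intros; lia.
  - destruct (IHn (fun j Hj => Hc j (Nat.lt_lt_succ_r _ _ Hj)) eps Heps) as [d1 [Hd1 H1]].
    destruct (proj1 (continuity_pt_metric _ _) (Hc n (Nat.lt_succ_diag_r n)) eps Heps)
      as [d2 [Hd2 H2]].
    exists (Rmin d1 d2); split; [apply Rmin_pos; auto|].
    intros s Hs j Hj. destruct (Nat.eq_dec j n) as [->|Hne].
    + apply H2. eapply Rlt_le_trans; [apply Hs | apply Rmin_r].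
    + apply H1; [eapply Rlt_le_trans; [apply Hs | apply Rmin_l] | lia].
Qed.

Lemma lipschitz_field_continuous (n : nat) (G : (nat -> R) -> nat -> R) (L : R)
    (u : R -> nat -> R) (t : R) (i : nat) :
  0 <= L -> lipschitz_field n G L ->
  (forall j, (j < n)%nat -> continuity_pt (fun s => u s j) t) -> (i < n)%nat ->
  continuity_pt (fun s => G (u s) i) t.
Proof.
  intros HL Hlip Hc Hi. apply continuity_pt_metric. intros eps Heps.
  assert (He : 0 < eps / (L + 1)) by (apply Rdiv_lt_0_compat; lra).
  destruct (common_modulus n u t Hc _ He) as [del [Hd H]].
  exists del; split; auto. intros s Hs.
  eapply Rle_lt_trans; [apply (Hlip (u s) (u t) (eps / (L + 1))); auto |].
  { intros j Hj; left; apply H; auto. }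
  replace (L * (eps / (L + 1))) with (eps - eps / (L + 1)) by (field; lra). lra.
Qed.

(* Picard-Lindelof: the system y' = G(y), y(c) = y0 has a solution on (c - h, c + h)
   when |G| <= M and G is L-Lipschitz with L h <= 1/2.  The iterates
   y_{k+1}(t) = y0 + int_c^t G(y_k) contract by 1/2 uniformly in t. *)
Section Picard.
Variables (n : nat) (G : (nat -> R) -> nat -> R) (L M : R) (y0 : nat -> R) (c h : R).
Hypothesis Hh : 0 < h.
Hypothesis HL : 0 <= L.
Hypothesis HM : 0 <= M.
Hypothesis HLh : L * h <= / 2.
Hypothesis Hlip : lipschitz_field n G L.
Hypothesis Hbd : forall u i, (i < n)%nat -> Rabs (G u i) <= M.

(* The Picard iterates; outside [c - h, c + h] they are extended as constants. *)
Fixpoint picard (k : nat) : R -> nat -> R :=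
  match k with
  | O => fun _ i => y0 i
  | S k => fun t i =>
      let P := antiderivative (fun s => G (picard k s) i) (c - h) (c + h) in
      y0 i + (P (clamp c h t) - P c)
  end.

Lemma picard_continuous (k : nat) (i : nat) (t : R) :
  (i < n)%nat -> continuity_pt (fun s => picard k s i) t.
Proof.
  revert i t. induction k as [|k IHk]; intros i t Hi.
  - apply continuity_pt_const. intros x y. reflexivity.
  - set (g := fun s => G (picard k s) i).
    assert (Hg : forall x, continuity_pt g x).
    { intros x. apply (lipschitz_field_continuous n G L); auto. }
    set (P := antiderivative g (c - h) (c + h)).
    assert (HP : forall x, c - h <= x <= c + h -> continuity_pt P x).
    { intros x Hx. apply derivable_continuous_pt. exists (g x).
      apply antiderivative_spec; auto; lra. }
    apply continuity_pt_metric. intros eps Heps.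
    destruct (proj1 (continuity_pt_metric _ _) (HP _ (clamp_in c h t ltac:(lra))) eps Heps)
      as [del [Hd H]].
    exists del; split; auto. intros s Hs. cbn [picard]. fold g P.
    replace (y0 i + (P (clamp c h s) - P c) - (y0 i + (P (clamp c h t) - P c)))
      with (P (clamp c h s) - P (clamp c h t)) by ring.
    apply H. eapply Rle_lt_trans; [apply clamp_dist; lra | auto].
Qed.

Lemma picard_derivative (k : nat) (i : nat) (t : R) : (i < n)%nat -> c - h < t < c + h ->
  derivable_pt_lim (fun s => picard (S k) s i) t (G (picard k t) i).
Proof.
  intros Hi Ht.
  set (g := fun s => G (picard k s) i).
  assert (Hg : forall x, continuity_pt g x).
  { intros x. apply (lipschitz_field_continuous n G L); auto.
    intros; apply picard_continuous; auto. }
  set (P := antiderivative g (c - h) (c + h)).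
  apply (derivable_pt_lim_locally_ext (fun s => y0 i + (P s - P c)) _ t (c - h) (c + h)); auto.
  { intros y Hy. cbn [picard]. fold g P. rewrite (clamp_id c h y); lra. }
  apply derivable_pt_lim_offset, antiderivative_spec; auto; lra.
Qed.

Lemma picard_initial (k : nat) (i : nat) : picard k c i = y0 i.
Proof. destruct k; simpl; auto. rewrite clamp_id by lra. ring. Qed.

Lemma picard_step_bound (k : nat) (t : R) (i : nat) : (i < n)%nat ->
  Rabs (picard (S k) t i - picard k t i) <= M * h * (/2)^k.
Proof.
  revert t i. induction k as [|k IHk]; intros t i Hi;
    pose proof (clamp_in c h t ltac:(lra)) as Hct;
    assert (Hdt : Rabs (clamp c h t - c) <= h) by (apply Rabs_le; lra).
  - set (g := fun s => G (picard 0 s) i).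
    set (P := antiderivative g (c - h) (c + h)).
    change (Rabs (y0 i + (P (clamp c h t) - P c) - y0 i) <= M * h * (/ 2) ^ 0).
    replace (y0 i + (P (clamp c h t) - P c) - y0 i) with (P (clamp c h t) - P c) by ring.
    eapply Rle_trans; [apply (mean_value_bound P g (c - h) (c + h) c (clamp c h t) M) |]; try lra.
    + intros; apply antiderivative_spec; try lra.
      intros x _. apply (lipschitz_field_continuous n G L); auto.
      intros; apply picard_continuous; auto.
    + intros; apply Hbd; auto.
    + simpl. nra.
  - set (g1 := fun s => G (picard (S k) s) i).
    set (g0 := fun s => G (picard k s) i).
    assert (Hc : forall k' x, continuity_pt (fun s => G (picard k' s) i) x).
    { intros k' x. apply (lipschitz_field_continuous n G L); auto.
      intros; apply picard_continuous; auto. }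
    set (P1 := antiderivative g1 (c - h) (c + h)).
    set (P0 := antiderivative g0 (c - h) (c + h)).
    change (Rabs (y0 i + (P1 (clamp c h t) - P1 c) - (y0 i + (P0 (clamp c h t) - P0 c)))
              <= M * h * (/ 2) ^ S k).
    replace (y0 i + (P1 (clamp c h t) - P1 c) - (y0 i + (P0 (clamp c h t) - P0 c))) with
      ((fun x => P1 x - P0 x) (clamp c h t) - (fun x => P1 x - P0 x) c) by ring.
    set (B := M * h * (/2)^k).
    assert (HB : 0 <= B).
    { unfold B. pose proof (pow_le (/2) k ltac:(lra)).
      apply Rmult_le_pos; [apply Rmult_le_pos |]; lra. }
    eapply Rle_trans.
    { apply (mean_value_bound (fun x => P1 x - P0 x) (fun x => g1 x - g0 x)
               (c - h) (c + h) c (clamp c h t) (L * B)); try lra.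
      - intros x Hx.
        apply derivable_pt_lim_minus; apply antiderivative_spec; try lra; intros; apply Hc.
      - intros x Hx. exact (Hlip _ _ _ (fun j Hj => IHk x j Hj) i Hi). }
    replace (M * h * (/ 2) ^ S k) with (B / 2) by (unfold B; simpl; field).
    assert (L * B * Rabs (clamp c h t - c) <= L * B * h) by (apply Rmult_le_compat_l; nra).
    nra.
Qed.

Lemma picard_cauchy_bound (p k : nat) (t : R) (i : nat) : (i < n)%nat ->
  Rabs (picard (k + p) t i - picard k t i)
    <= 2 * M * h * (/2)^k - 2 * M * h * (/2)^(k + p).
Proof.
  intros Hi. induction p as [|p IHp].
  - rewrite Nat.add_0_r, Rminus_diag, Rminus_diag, Rabs_R0; lra.
  - rewrite Nat.add_succ_r.
    pose proof (picard_step_bound (k + p) t i Hi).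
    pose proof (Rabs_triang (picard (S (k + p)) t i - picard (k + p) t i)
                            (picard (k + p) t i - picard k t i)).
    replace (picard (S (k + p)) t i - picard (k + p) t i + (picard (k + p) t i - picard k t i))
      with (picard (S (k + p)) t i - picard k t i) in H0 by ring.
    simpl ((/ 2) ^ S (k + p)). lra.
Qed.

Lemma picard_uniform_cauchy (k m : nat) (t : R) (i : nat) : (i < n)%nat -> (k <= m)%nat ->
  Rabs (picard m t i - picard k t i) <= 2 * M * h * (/2)^k.
Proof.
  intros Hi Hkm. replace m with (k + (m - k))%nat by lia.
  pose proof (picard_cauchy_bound (m - k) k t i Hi).
  pose proof (pow_le (/2) (k + (m - k)) ltac:(lra)).
  assert (0 <= 2 * M * h * (/ 2) ^ (k + (m - k))) by (repeat apply Rmult_le_pos; lra). lra.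
Qed.

Definition picard_limit (t : R) (i : nat) : R := seq_limit (fun k => picard k t i).

Lemma picard_limit_bound (k : nat) (t : R) (i : nat) : (i < n)%nat ->
  Rabs (picard_limit t i - picard k t i) <= 2 * M * h * (/2)^k.
Proof.
  intros Hi.
  assert (Hc : Cauchy_crit (fun k => picard k t i)).
  { intros eps Heps. destruct (geometric_small (4 * M * h) eps) as [N HN]; auto.
    { repeat apply Rmult_le_pos; lra. }
    exists N. intros p q Hp Hq. unfold R_dist.
    pose proof (picard_uniform_cauchy N p t i Hi Hp).
    pose proof (picard_uniform_cauchy N q t i Hi Hq).
    pose proof (Rabs_triang (picard p t i - picard N t i) (picard N t i - picard q t i)).
    replace (picard p t i - picard N t i + (picard N t i - picard q t i))
      with (picard p t i - picard q t i) in H1 by ring.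
    rewrite (Rabs_minus_sym (picard N t i)) in H1.
    specialize (HN N (le_n N)). lra. }
  destruct (R_complete _ Hc) as [l Hl].
  apply (limit_dist_bound (fun k => picard k t i) _ _ _ k).
  - apply seq_limit_spec. exists l; auto.
  - intros m Hm. apply picard_uniform_cauchy; auto.
Qed.

(* The limit solves the system, by uniform convergence of the derivatives. *)
Theorem picard_lindelof :
  exists z : R -> nat -> R, (forall i, (i < n)%nat -> z c i = y0 i) /\
    forall t, c - h < t < c + h -> forall i, (i < n)%nat ->
      derivable_pt_lim (fun s => z s i) t (G (z t) i).
Proof.
  exists picard_limit. split.
  - intros i Hi. pose proof (picard_limit_bound 0 c i Hi) as H0.
    pose proof (picard_limit_bound 1 c i Hi) as H1.
    assert (Hz : Rabs (picard_limit c i - y0 i) <= 0).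
    { apply (limit_dist_bound (fun k => picard k c i) _ _ _ O).
      - apply seq_limit_spec. exists (y0 i). intros eps Heps. exists O. intros m _.
        unfold R_dist. rewrite picard_initial, Rminus_diag, Rabs_R0; auto.
      - intros m _. rewrite picard_initial, Rminus_diag, Rabs_R0; lra. }
    unfold Rabs in Hz; destruct Rcase_abs in Hz; lra.
  - intros t Ht i Hi.
    apply (CVU_derivable (fun k s => picard (S k) s i) (fun k s => G (picard k s) i)
            (fun s => picard_limit s i) (fun s => G (picard_limit s) i) c (mkposreal h Hh)).
    + intros eps Heps. destruct (geometric_small (L * (2 * M * h)) eps) as [N HN].
      { repeat apply Rmult_le_pos; lra. } { exact Heps. }
      exists N. intros k y Hk Hy.
      eapply Rle_lt_trans.
      { apply (Hlip _ _ (2 * M * h * (/2)^k)); [intros j Hj; apply picard_limit_bound |]; auto. }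
      specialize (HN k Hk). lra.
    + intros x Hx eps Heps. destruct (geometric_small (2 * M * h) eps) as [N HN].
      { repeat apply Rmult_le_pos; lra. } { exact Heps. }
      exists N. intros k Hk. unfold R_dist. rewrite Rabs_minus_sym.
      eapply Rle_lt_trans; [apply picard_limit_bound; auto |].
      specialize (HN (S k) ltac:(lia)). exact HN.
    + intros k x Hx. apply picard_derivative; auto.
      unfold Boule in Hx; simpl in Hx. unfold Rabs in Hx; destruct Rcase_abs in Hx; lra.
    + unfold Boule; simpl. unfold Rabs; destruct Rcase_abs; lra.
Qed.

End Picard.

(* Uniqueness on a short interval [s, s + e): if two solutions of y' = F(y) start
   together, stay within C of each other, and F is L-Lipschitz along them with
   L e <= 1/2, then each bound C / 2^k on their distance improves to C / 2^(k+1). *)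
Lemma ode_uniqueness (n : nat) (F : (nat -> R) -> nat -> R) (Y Z : R -> nat -> R)
    (L C s e : R) :
  0 <= L -> L * e <= / 2 ->
  (forall c, s <= c < s + e -> forall j, (j < n)%nat ->
     derivable_pt_lim (fun x => Y x j) c (F (Y c) j) /\
     derivable_pt_lim (fun x => Z x j) c (F (Z c) j)) ->
  (forall c, s <= c < s + e -> forall B, (forall j, (j < n)%nat -> Rabs (Y c j - Z c j) <= B) ->
     forall i, (i < n)%nat -> Rabs (F (Y c) i - F (Z c) i) <= L * B) ->
  (forall c, s <= c < s + e -> forall j, (j < n)%nat -> Rabs (Y c j - Z c j) <= C) ->
  (forall j, (j < n)%nat -> Y s j = Z s j) ->
  forall t j, s <= t < s + e -> (j < n)%nat -> Y t j = Z t j.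
Proof.
  intros HL HLe Hd Hlip HC H0 t j Ht Hj.
  assert (Hk : forall k t j, s <= t < s + e -> (j < n)%nat ->
            Rabs (Y t j - Z t j) <= C * (/2)^k).
  { induction k as [|k IHk]; intros t' j' Ht' Hj'; [rewrite pow_O, Rmult_1_r; auto |].
    assert (HB : 0 <= C * (/2)^k).
    { eapply Rle_trans; [apply Rabs_pos | apply (IHk s j'); [lra | auto]]. }
    assert (Hdist : Rabs ((fun x => Y x j' - Z x j') t' - (fun x => Y x j' - Z x j') s)
                      <= L * (C * (/2)^k) * Rabs (t' - s)).
    { apply (mean_value_bound (fun x => Y x j' - Z x j') (fun x => F (Y x) j' - F (Z x) j') s t');
        try lra.
      - intros c Hc. destruct (Hd c ltac:(lra) j' Hj'). apply derivable_pt_lim_minus; auto.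
      - intros c Hc. apply Hlip; [lra | | auto]. intros i Hi. apply IHk; auto; lra. }
    simpl in Hdist. rewrite (H0 j' Hj'), Rminus_diag, Rminus_0_r in Hdist.
    rewrite (Rabs_right (t' - s)) in Hdist by lra.
    assert (L * (C * (/2)^k) * (t' - s) <= L * (C * (/2)^k) * e).
    { apply Rmult_le_compat_l; [apply Rmult_le_pos |]; lra. }
    assert (L * e * (C * (/2)^k) <= / 2 * (C * (/2)^k)) by (apply Rmult_le_compat_r; lra).
    simpl. lra. }
  apply Rminus_diag_uniq, (zero_of_geometric_bound _ C). intros k. apply Hk; auto.
Qed.

(** * The pair potential *)

Lemma Rpower_gt0 (x y : R) : 0 < Rpower x y.
Proof. unfold Rpower; apply exp_pos. Qed.

Lemma Rpower_antitone (x y e : R) : 0 < x <= y -> e <= 0 -> Rpower y e <= Rpower x e.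
Proof.
  intros [Hx [Hxy|<-]] He; [| lra]. unfold Rpower.
  assert (ln x < ln y) by (apply ln_increasing; auto).
  destruct (Req_dec e 0) as [->|Hne]; [rewrite !Rmult_0_l; lra |].
  left. apply exp_increasing. nra.
Qed.

Lemma Rpower_antitone_strict (x y e : R) : 0 < x < y -> e < 0 -> Rpower y e < Rpower x e.
Proof.
  intros [Hx Hxy] He. unfold Rpower. apply exp_increasing.
  assert (ln x < ln y) by (apply ln_increasing; auto). nra.
Qed.

Lemma derivable_pt_lim_lincomb (f g : R -> R) (x l1 l2 p q : R) :
  derivable_pt_lim f x l1 -> derivable_pt_lim g x l2 ->
  derivable_pt_lim (fun y => p * f y + q * g y) x (p * l1 + q * l2).
Proof.
  intros H1 H2.
  exact (derivable_pt_lim_plus (mult_real_fct p f) (mult_real_fct q g) x _ _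
           (derivable_pt_lim_scal f p x l1 H1) (derivable_pt_lim_scal g q x l2 H2)).
Qed.

(* Each pair term of W has the form  phi(x) = - al / |x|^a + be / |x|^b,
   x = q_i - q_j.  Since b > a the repulsive term dominates at short range:
   phi is bounded below and phi(x) -> +oo as x -> 0, which is what excludes
   collisions once the energy is conserved. *)
Section PairPotential.
Variables (a b al be : R).
Hypothesis Ha : 0 < a.
Hypothesis Hab : a < b.
Hypothesis Hal : 0 < al.
Hypothesis Hbe : 0 < be.

Definition pair_pot (x : R) : R := - (al / Rpower (Rabs x) a) + be / Rpower (Rabs x) b.

Definition radial_pot (r : R) : R := - al * Rpower r (- a) + be * Rpower r (- b).
Definition radial_force (r : R) : R :=
  al * a * Rpower r (- a - 1) - be * b * Rpower r (- b - 1).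

Definition sgn (x : R) : R := if Rle_dec 0 x then 1 else -1.

Definition pair_force (x : R) : R := radial_force (Rabs x) * sgn x.

Lemma pair_pot_radial (x : R) : pair_pot x = radial_pot (Rabs x).
Proof. unfold pair_pot, radial_pot, Rdiv. rewrite !Rpower_Ropp. ring. Qed.

Lemma radial_pot_derivative (r : R) : 0 < r -> derivable_pt_lim radial_pot r (radial_force r).
Proof.
  intros Hr. unfold radial_pot, radial_force.
  replace (al * a * Rpower r (- a - 1) - be * b * Rpower r (- b - 1)) with
    ((- al) * ((- a) * Rpower r (- a - 1)) + be * ((- b) * Rpower r (- b - 1))) by ring.
  apply derivable_pt_lim_lincomb; apply derivable_pt_lim_power; auto.
Qed.

Lemma pair_force_spec (x : R) : x <> 0 -> derivable_pt_lim pair_pot x (pair_force x).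
Proof.
  intros Hx.
  apply (derivable_pt_lim_ext (comp radial_pot Rabs)).
  { intros y. unfold comp. rewrite pair_pot_radial; auto. }
  unfold pair_force. apply derivable_pt_lim_comp.
  - unfold sgn. destruct (Rle_dec 0 x); [apply Rabs_derive_1 | apply Rabs_derive_2]; lra.
  - apply radial_pot_derivative, Rabs_pos_lt, Hx.
Qed.

Lemma pair_pot_chain (f g : R -> R) (t lf lg : R) : f t - g t <> 0 ->
  derivable_pt_lim f t lf -> derivable_pt_lim g t lg ->
  derivable_pt_lim (fun s => pair_pot (f s - g s)) t (pair_force (f t - g t) * (lf - lg)).
Proof.
  intros Hn Hf Hg.
  exact (derivable_pt_lim_comp (minus_fct f g) pair_pot t _ _
           (derivable_pt_lim_minus f g t lf lg Hf Hg) (pair_force_spec _ Hn)).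
Qed.

Lemma pair_pot_shift (x y : R) : x - y <> 0 ->
  derivable_pt_lim (fun z => pair_pot (z - y)) x (pair_force (x - y)).
Proof.
  intros H. apply (derivable_pt_lim_ext (fun z => pair_pot (1 * z + - y)));
    [intros; f_equal; ring |].
  rewrite <- (Rmult_1_l (pair_force (x - y))). apply derivable_pt_lim_affine_arg.
  replace (1 * x + - y) with (x - y) by ring. apply pair_force_spec, H.
Qed.

Lemma pair_pot_shift_rev (x y : R) : y - x <> 0 ->
  derivable_pt_lim (fun z => pair_pot (y - z)) x (- pair_force (y - x)).
Proof.
  intros H. apply (derivable_pt_lim_ext (fun z => pair_pot (-1 * z + y)));
    [intros; f_equal; ring |].
  replace (- pair_force (y - x)) with (-1 * pair_force (y - x)) by ring.
  apply derivable_pt_lim_affine_arg.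
  replace (-1 * x + y) with (y - x) by ring. apply pair_force_spec, H.
Qed.

(* Below the threshold r <= min(1, (be / (2 al))^(1/(b-a))) the repulsion wins:
   phi >= (be/2) r^-b. *)
Definition short_range : R := Rmin 1 (Rpower (be / (2 * al)) (/ (b - a))).

Lemma short_range_pos : 0 < short_range.
Proof. unfold short_range; apply Rmin_pos; [lra | apply Rpower_gt0]. Qed.

Lemma radial_pot_short_range (r : R) : 0 < r <= short_range ->
  be / 2 * Rpower r (- b) <= radial_pot r.
Proof.
  intros [Hr Hrd].
  assert (HS : 2 * al / be <= Rpower r (- (b - a))).
  { eapply Rle_trans; [| apply (Rpower_antitone r short_range); lra].
    eapply Rle_trans; [| apply (Rpower_antitone short_range (Rpower (be / (2 * al)) (/ (b - a))));
                         [split; [apply short_range_pos | apply Rmin_r] | lra]].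
    rewrite Rpower_mult. replace (/ (b - a) * - (b - a)) with (Ropp 1) by (field; lra).
    rewrite Rpower_Ropp, Rpower_1; [right; field; lra | apply Rdiv_lt_0_compat; lra]. }
  unfold radial_pot.
  replace (Rpower r (- b)) with (Rpower r (- a) * Rpower r (- (b - a)))
    by (rewrite <- Rpower_plus; f_equal; ring).
  pose proof (Rpower_gt0 r (- a)).
  assert (be * Rpower r (- (b - a)) >= 2 * al).
  { apply Rle_ge. replace (2 * al) with (be * (2 * al / be)) by (field; lra).
    apply Rmult_le_compat_l; lra. }
  nra.
Qed.

Lemma pair_pot_lower_bound : exists C, 0 <= C /\ forall x, x <> 0 -> - C <= pair_pot x.
Proof.
  pose proof short_range_pos as Hd0.
  exists (al * Rpower short_range (- a)). split; [pose proof (Rpower_gt0 short_range (- a)); nra |].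
  intros x Hx. rewrite pair_pot_radial.
  pose proof (Rabs_pos_lt x Hx) as Hr.
  pose proof (Rpower_gt0 (Rabs x) (- b)). pose proof (Rpower_gt0 short_range (- a)).
  destruct (Rle_dec (Rabs x) short_range).
  - pose proof (radial_pot_short_range (Rabs x) ltac:(split; auto)). nra.
  - unfold radial_pot.
    pose proof (Rpower_antitone short_range (Rabs x) (- a) ltac:(lra) ltac:(lra)).
    nra.
Qed.

Lemma pair_pot_sublevel_gap (K : R) :
  exists del, 0 < del /\ forall x, x <> 0 -> pair_pot x <= K -> del <= Rabs x.
Proof.
  pose proof short_range_pos as Hd0.
  set (K' := Rmax K 1).
  assert (HK' : 1 <= K' /\ K <= K') by (split; [apply Rmax_r | apply Rmax_l]).
  set (d1 := Rpower (2 * K' / be) (- / b)).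
  exists (Rmin short_range d1). split; [apply Rmin_pos; auto; apply Rpower_gt0 |].
  intros x Hx HK. rewrite pair_pot_radial in HK.
  pose proof (Rabs_pos_lt x Hx) as Hr.
  destruct (Rle_dec short_range (Rabs x)); [pose proof (Rmin_l short_range d1); lra |].
  destruct (Rle_dec d1 (Rabs x)); [pose proof (Rmin_r short_range d1); lra |].
  exfalso.
  pose proof (radial_pot_short_range (Rabs x) ltac:(lra)).
  pose proof (Rpower_antitone_strict (Rabs x) d1 (- b) ltac:(split; lra) ltac:(lra)).
  assert (Hd1 : Rpower d1 (- b) = 2 * K' / be).
  { unfold d1. rewrite Rpower_mult. replace (- / b * - b) with 1 by (field; lra).
    apply Rpower_1, Rdiv_lt_0_compat; lra. }
  rewrite Hd1 in H0.
  assert (be / 2 * (2 * K' / be) < be / 2 * Rpower (Rabs x) (- b))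
    by (apply Rmult_lt_compat_l; lra).
  replace (be / 2 * (2 * K' / be)) with K' in H1 by (field; lra). lra.
Qed.

Definition force_bound (r0 : R) : R :=
  al * a * Rpower r0 (- a - 1) + be * b * Rpower r0 (- b - 1).
Definition force_lipschitz (r0 : R) : R :=
  al * a * (a + 1) * Rpower r0 (- a - 1 - 1) + be * b * (b + 1) * Rpower r0 (- b - 1 - 1).

Lemma force_bound_nonneg (r0 : R) : 0 <= force_bound r0.
Proof.
  unfold force_bound. pose proof (Rpower_gt0 r0 (- a - 1)). pose proof (Rpower_gt0 r0 (- b - 1)).
  assert (0 < al * a) by nra. assert (0 < be * b) by nra. nra.
Qed.

Lemma force_lipschitz_nonneg (r0 : R) : 0 <= force_lipschitz r0.
Proof.
  unfold force_lipschitz.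
  pose proof (Rpower_gt0 r0 (- a - 1 - 1)). pose proof (Rpower_gt0 r0 (- b - 1 - 1)).
  assert (0 < al * a * (a + 1)) by (apply Rmult_lt_0_compat; nra).
  assert (0 < be * b * (b + 1)) by (apply Rmult_lt_0_compat; nra). nra.
Qed.

Lemma radial_force_bound (r0 r : R) : 0 < r0 <= r -> Rabs (radial_force r) <= force_bound r0.
Proof.
  intros Hr. unfold radial_force, force_bound.
  pose proof (Rpower_antitone r0 r (- a - 1) Hr ltac:(lra)).
  pose proof (Rpower_antitone r0 r (- b - 1) Hr ltac:(lra)).
  pose proof (Rpower_gt0 r (- a - 1)). pose proof (Rpower_gt0 r (- b - 1)).
  assert (0 < al * a) by nra. assert (0 < be * b) by nra.
  unfold Rabs; destruct Rcase_abs; nra.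
Qed.

Lemma radial_force_lipschitz (r0 r s : R) : 0 < r0 -> r0 <= r -> r0 <= s ->
  Rabs (radial_force r - radial_force s) <= force_lipschitz r0 * Rabs (r - s).
Proof.
  intros Hr0 Hr Hs.
  apply (mean_value_bound radial_force
    (fun y => al * a * ((- a - 1) * Rpower y (- a - 1 - 1))
              - be * b * ((- b - 1) * Rpower y (- b - 1 - 1))) r0 (Rmax r s));
    try (split; [lra | first [apply Rmax_l | apply Rmax_r]]).
  - intros y Hy. unfold radial_force.
    apply (derivable_pt_lim_ext
             (fun z => (al * a) * Rpower z (- a - 1) + (- (be * b)) * Rpower z (- b - 1))).
    { intros; ring. }
    replace (al * a * ((- a - 1) * Rpower y (- a - 1 - 1))
             - be * b * ((- b - 1) * Rpower y (- b - 1 - 1)))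
      with ((al * a) * ((- a - 1) * Rpower y (- a - 1 - 1))
            + (- (be * b)) * ((- b - 1) * Rpower y (- b - 1 - 1))) by ring.
    apply derivable_pt_lim_lincomb; apply derivable_pt_lim_power; lra.
  - intros y Hy. unfold force_lipschitz.
    pose proof (Rpower_antitone r0 y (- a - 1 - 1) ltac:(lra) ltac:(lra)).
    pose proof (Rpower_antitone r0 y (- b - 1 - 1) ltac:(lra) ltac:(lra)).
    pose proof (Rpower_gt0 y (- a - 1 - 1)). pose proof (Rpower_gt0 y (- b - 1 - 1)).
    assert (0 < al * a * (a + 1)) by (apply Rmult_lt_0_compat; nra).
    assert (0 < be * b * (b + 1)) by (apply Rmult_lt_0_compat; nra).
    unfold Rabs; destruct Rcase_abs; nra.
Qed.

Lemma sgn_abs (x : R) : Rabs (sgn x) = 1.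
Proof. unfold sgn; destruct Rle_dec; unfold Rabs; destruct Rcase_abs; lra. Qed.

Lemma pair_force_bound (r0 x : R) : 0 < r0 -> r0 <= Rabs x ->
  Rabs (pair_force x) <= force_bound r0.
Proof.
  intros. unfold pair_force. rewrite Rabs_mult, sgn_abs, Rmult_1_r.
  apply radial_force_bound; auto.
Qed.

Definition same_side (r0 x y : R) : Prop := (r0 <= x /\ r0 <= y) \/ (x <= - r0 /\ y <= - r0).

Lemma pair_force_lipschitz (r0 x y : R) : 0 < r0 -> same_side r0 x y ->
  Rabs (pair_force x - pair_force y) <= force_lipschitz r0 * Rabs (x - y).
Proof.
  intros Hr0 Hs. unfold pair_force.
  assert (Hsg : sgn x = sgn y /\ r0 <= Rabs x /\ r0 <= Rabs y).
  { unfold sgn; destruct Hs as [[H1 H2]|[H1 H2]].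
    - rewrite (Rabs_right x), (Rabs_right y) by lra. repeat destruct Rle_dec; repeat split; lra.
    - rewrite (Rabs_left x), (Rabs_left y) by lra. repeat destruct Rle_dec; repeat split; lra. }
  destruct Hsg as [-> [Hx Hy]].
  replace (radial_force (Rabs x) * sgn y - radial_force (Rabs y) * sgn y) with
    ((radial_force (Rabs x) - radial_force (Rabs y)) * sgn y) by ring.
  rewrite Rabs_mult, sgn_abs, Rmult_1_r.
  eapply Rle_trans; [apply (radial_force_lipschitz r0); auto |].
  apply Rmult_le_compat_l; [apply force_lipschitz_nonneg | apply Rabs_triang_inv2].
Qed.

End PairPotential.

(** * Solutions of the equations of motion *)

Definition sol_at (m1 m2 m3 : R) (W : R -> R -> R -> R) (q1 q2 q3 p1 p2 p3 : R -> R) (t : R)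
  : Prop :=
  noncollision (q1 t) (q2 t) (q3 t) /\
  derivable_pt_lim q1 t (p1 t / m1) /\
  derivable_pt_lim q2 t (p2 t / m2) /\
  derivable_pt_lim q3 t (p3 t / m3) /\
  (exists v, derivable_pt_lim p1 t v /\
     derivable_pt_lim (fun x => W x (q2 t) (q3 t)) (q1 t) (- v)) /\
  (exists v, derivable_pt_lim p2 t v /\
     derivable_pt_lim (fun x => W (q1 t) x (q3 t)) (q2 t) (- v)) /\
  (exists v, derivable_pt_lim p3 t v /\
     derivable_pt_lim (fun x => W (q1 t) (q2 t) x) (q3 t) (- v)).

Lemma sol_at_local (m1 m2 m3 : R) (W : R -> R -> R -> R)
    (q1 q2 q3 p1 p2 p3 q1' q2' q3' p1' p2' p3' : R -> R) (lo hi t : R) :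
  lo < t < hi ->
  agree_on q1 q2 q3 p1 p2 p3 q1' q2' q3' p1' p2' p3' lo hi ->
  sol_at m1 m2 m3 W q1 q2 q3 p1 p2 p3 t -> sol_at m1 m2 m3 W q1' q2' q3' p1' p2' p3' t.
Proof.
  intros Ht Heq [Hnc [D1 [D2 [D3 [[v1 [V1 W1]] [[v2 [V2 W2]] [v3 [V3 W3]]]]]]]].
  destruct (Heq t Ht) as [E1 [E2 [E3 [E4 [E5 E6]]]]].
  unfold sol_at. rewrite E1, E2, E3, E4, E5, E6.
  assert (Hloc : forall f g : R -> R, (forall y, lo < y < hi -> g y = f y) ->
            forall l, derivable_pt_lim f t l -> derivable_pt_lim g t l).
  { intros f g Hfg l Hf. apply (derivable_pt_lim_locally_ext f g t lo hi); auto.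
    intros; symmetry; auto. }
  split; [exact Hnc |].
  split; [apply (Hloc q1); auto; intros y Hy; apply Heq, Hy |].
  split; [apply (Hloc q2); auto; intros y Hy; apply Heq, Hy |].
  split; [apply (Hloc q3); auto; intros y Hy; apply Heq, Hy |].
  split; [exists v1 | split; [exists v2 | exists v3]]; split; auto;
    [apply (Hloc p1) | apply (Hloc p2) | apply (Hloc p3)]; auto; intros y Hy; apply Heq, Hy.
Qed.

Definition splice (t1 : R) (f g : R -> R) (t : R) : R := if Rlt_dec t t1 then f t else g t.

Lemma solution_splice (m1 m2 m3 : R) (W : R -> R -> R -> R)
    (q1 q2 q3 p1 p2 p3 q1' q2' q3' p1' p2' p3' : R -> R) (t0 t1 s t2 : R) :
  t0 <= s < t1 -> t1 < t2 ->
  is_solution m1 m2 m3 W q1 q2 q3 p1 p2 p3 t0 t1 ->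
  is_solution m1 m2 m3 W q1' q2' q3' p1' p2' p3' s t2 ->
  agree_on q1' q2' q3' p1' p2' p3' q1 q2 q3 p1 p2 p3 s t1 ->
  is_solution m1 m2 m3 W (splice t1 q1 q1') (splice t1 q2 q2') (splice t1 q3 q3')
    (splice t1 p1 p1') (splice t1 p2 p2') (splice t1 p3 p3') t0 t2 /\
  agree_on q1 q2 q3 p1 p2 p3 (splice t1 q1 q1') (splice t1 q2 q2') (splice t1 q3 q3')
    (splice t1 p1 p1') (splice t1 p2 p2') (splice t1 p3 p3') t0 t1.
Proof.
  intros Hs Ht2 Hsol Hsol' Hover.
  assert (Hleft : agree_on q1 q2 q3 p1 p2 p3 (splice t1 q1 q1') (splice t1 q2 q2')
                    (splice t1 q3 q3') (splice t1 p1 p1') (splice t1 p2 p2')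
                    (splice t1 p3 p3') t0 t1).
  { intros t Ht. unfold splice. destruct Rlt_dec; [repeat split | lra]. }
  split; [| exact Hleft].
  intros t Ht. change (sol_at m1 m2 m3 W (splice t1 q1 q1') (splice t1 q2 q2') (splice t1 q3 q3')
                         (splice t1 p1 p1') (splice t1 p2 p2') (splice t1 p3 p3') t).
  destruct (Rlt_dec t t1) as [Hlt | Hge].
  - apply (sol_at_local m1 m2 m3 W q1 q2 q3 p1 p2 p3 _ _ _ _ _ _ t0 t1); [lra | exact Hleft |].
    apply Hsol; lra.
  - apply (sol_at_local m1 m2 m3 W q1' q2' q3' p1' p2' p3' _ _ _ _ _ _ s t2); [lra | |].
    + intros y Hy. unfold splice. destruct (Rlt_dec y t1).
      * destruct (Hover y ltac:(lra)) as [E1 [E2 [E3 [E4 [E5 E6]]]]]. repeat split; auto.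
      * repeat split.
    + apply Hsol'; lra.
Qed.

Lemma solution_time_reversal (m1 m2 m3 : R) (W : R -> R -> R -> R)
    (q1 q2 q3 p1 p2 p3 : R -> R) (ta tb : R) :
  is_solution m1 m2 m3 W q1 q2 q3 p1 p2 p3 ta tb ->
  is_solution m1 m2 m3 W (fun t => q1 (- t)) (fun t => q2 (- t)) (fun t => q3 (- t))
    (fun t => - p1 (- t)) (fun t => - p2 (- t)) (fun t => - p3 (- t)) (- tb) (- ta).
Proof.
  intros Hs t Ht.
  destruct (Hs (- t) ltac:(lra))
    as [Hnc [D1 [D2 [D3 [[v1 [V1 W1]] [[v2 [V2 W2]] [v3 [V3 W3]]]]]]]].
  assert (Hrev : forall (f : R -> R) l, derivable_pt_lim f (- t) l ->
            derivable_pt_lim (fun s => f (- s)) t (- l)).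
  { intros f l Hf. apply (derivable_pt_lim_ext (fun s => f (-1 * s + 0)));
      [intros; f_equal; ring |].
    replace (- l) with (-1 * l) by ring. apply derivable_pt_lim_affine_arg.
    replace (-1 * t + 0) with (- t) by ring. exact Hf. }
  assert (Hrev2 : forall (f : R -> R) l, derivable_pt_lim f (- t) l ->
            derivable_pt_lim (fun s => - f (- s)) t l).
  { intros f l Hf. rewrite <- (Ropp_involutive l).
    exact (derivable_pt_lim_opp (fun s => f (- s)) t _ (Hrev f l Hf)). }
  split; [exact Hnc |].
  repeat split; [| | | exists v1 | exists v2 | exists v3]; try split; auto;
    [replace (- p1 (- t) / m1) with (- (p1 (- t) / m1)) by (unfold Rdiv; ring)
    | replace (- p2 (- t) / m2) with (- (p2 (- t) / m2)) by (unfold Rdiv; ring)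
    | replace (- p3 (- t) / m3) with (- (p3 (- t) / m3)) by (unfold Rdiv; ring)]; auto.
Qed.

(** * Balls in the phase space R^6 *)

Definition state (q1 q2 q3 p1 p2 p3 : R -> R) (t : R) (i : nat) : R :=
  match i with
  | 0%nat => q1 t | 1%nat => q2 t | 2%nat => q3 t
  | 3%nat => p1 t | 4%nat => p2 t | 5%nat => p3 t | _ => 0 end.

Definition well_separated (del P : R) (u : nat -> R) : Prop :=
  del <= Rabs (u 0%nat - u 1%nat) /\ del <= Rabs (u 0%nat - u 2%nat) /\
  del <= Rabs (u 1%nat - u 2%nat) /\
  Rabs (u 3%nat) <= P /\ Rabs (u 4%nat) <= P /\ Rabs (u 5%nat) <= P.

Lemma well_separated_noncollision (del P : R) (u : nat -> R) :
  0 < del -> well_separated del P u -> noncollision (u 0%nat) (u 1%nat) (u 2%nat).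
Proof.
  intros Hd [H01 [H02 [H12 _]]].
  repeat split; intros E; [rewrite E in H01 | rewrite E in H12 | rewrite E in H02];
    rewrite Rminus_diag, Rabs_R0 in *; lra.
Qed.

Definition in_ball (y0 : nat -> R) (rho : R) (u : nat -> R) : Prop :=
  forall j, (j < 6)%nat -> Rabs (u j - y0 j) <= rho.

Lemma in_ball_center (y0 : nat -> R) (rho : R) : 0 <= rho -> in_ball y0 rho y0.
Proof. intros Hr j _. rewrite Rminus_diag, Rabs_R0. exact Hr. Qed.

Definition ball_proj (y0 : nat -> R) (rho : R) (u : nat -> R) (j : nat) : R :=
  Rmax (y0 j - rho) (Rmin (y0 j + rho) (u j)).

Lemma ball_proj_in (y0 : nat -> R) (rho : R) (u : nat -> R) :
  0 <= rho -> in_ball y0 rho (ball_proj y0 rho u).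
Proof. intros ? j _; apply Rabs_le; unfold ball_proj, Rmax, Rmin; repeat destruct Rle_dec; lra. Qed.

Lemma ball_proj_dist (y0 : nat -> R) (rho : R) (u v : nat -> R) (j : nat) : 0 <= rho ->
  Rabs (ball_proj y0 rho u j - ball_proj y0 rho v j) <= Rabs (u j - v j).
Proof.
  intros; unfold ball_proj, Rmax, Rmin; repeat destruct Rle_dec; unfold Rabs;
  repeat destruct Rcase_abs; lra.
Qed.

Lemma ball_proj_id (y0 : nat -> R) (rho : R) (u : nat -> R) (j : nat) :
  Rabs (u j - y0 j) <= rho -> ball_proj y0 rho u j = u j.
Proof.
  intros H; apply Rabs_le_between in H.
  unfold ball_proj, Rmax, Rmin; repeat destruct Rle_dec; lra.
Qed.

Lemma ball_well_separated (y0 u : nat -> R) (del P : R) : 0 < del ->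
  well_separated del P y0 -> in_ball y0 (del / 4) u -> well_separated (del / 2) (P + del / 4) u.
Proof.
  intros Hd [G01 [G02 [G12 [P3 [P4 P5]]]]] Hb.
  pose proof (Rabs_le_between _ _ (Hb 0%nat ltac:(lia))).
  pose proof (Rabs_le_between _ _ (Hb 1%nat ltac:(lia))).
  pose proof (Rabs_le_between _ _ (Hb 2%nat ltac:(lia))).
  pose proof (Rabs_le_between _ _ (Hb 3%nat ltac:(lia))).
  pose proof (Rabs_le_between _ _ (Hb 4%nat ltac:(lia))).
  pose proof (Rabs_le_between _ _ (Hb 5%nat ltac:(lia))).
  apply Rabs_le_between in P3, P4, P5.
  unfold well_separated, Rabs in G01, G02, G12 |- *. repeat destruct Rcase_abs; repeat split; lra.
Qed.

(* Two points of that ball have each mutual difference on the same side of the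
   gap (-del/2, del/2); this is where the forces are Lipschitz. *)
Lemma ball_same_side (y0 u v : nat -> R) (del P : R) : 0 < del ->
  well_separated del P y0 -> in_ball y0 (del / 4) u -> in_ball y0 (del / 4) v ->
  same_side (del / 2) (u 0%nat - u 1%nat) (v 0%nat - v 1%nat) /\
  same_side (del / 2) (u 0%nat - u 2%nat) (v 0%nat - v 2%nat) /\
  same_side (del / 2) (u 1%nat - u 2%nat) (v 1%nat - v 2%nat).
Proof.
  intros Hd [G01 [G02 [G12 _]]] Hu Hv.
  pose proof (Rabs_le_between _ _ (Hu 0%nat ltac:(lia))).
  pose proof (Rabs_le_between _ _ (Hu 1%nat ltac:(lia))).
  pose proof (Rabs_le_between _ _ (Hu 2%nat ltac:(lia))).
  pose proof (Rabs_le_between _ _ (Hv 0%nat ltac:(lia))).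
  pose proof (Rabs_le_between _ _ (Hv 1%nat ltac:(lia))).
  pose proof (Rabs_le_between _ _ (Hv 2%nat ltac:(lia))).
  unfold same_side, Rabs in G01, G02, G12 |- *. repeat destruct Rcase_abs; lra.
Qed.

(** * The three-body system *)

Lemma scaled_difference_bound (x y m S B : R) : 0 < m -> / m <= S -> Rabs (x - y) <= B ->
  Rabs (x / m - y / m) <= S * B.
Proof.
  intros Hm HS Hxy. pose proof (Rinv_0_lt_compat m Hm).
  replace (x / m - y / m) with ((x - y) * / m) by (unfold Rdiv; ring).
  rewrite Rabs_mult, (Rabs_right (/ m)) by lra. rewrite Rmult_comm.
  apply Rmult_le_compat; auto using Rabs_pos; lra.
Qed.

Section ThreeBody.
Variables (m1 m2 m3 al12 al13 al23 be12 be13 be23 a b : R).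
Hypothesis Hm1 : 0 < m1.
Hypothesis Hm2 : 0 < m2.
Hypothesis Hm3 : 0 < m3.
Hypothesis Hal12 : 0 < al12.
Hypothesis Hal13 : 0 < al13.
Hypothesis Hal23 : 0 < al23.
Hypothesis Hbe12 : 0 < be12.
Hypothesis Hbe13 : 0 < be13.
Hypothesis Hbe23 : 0 < be23.
Hypothesis Ha : 0 < a.
Hypothesis Hab : a < b.

Local Notation W := (Wpot al12 al13 al23 a be12 be13 be23 b).
Local Notation phi12 := (pair_pot a b al12 be12).
Local Notation phi13 := (pair_pot a b al13 be13).
Local Notation phi23 := (pair_pot a b al23 be23).
Local Notation F12 := (pair_force a b al12 be12).
Local Notation F13 := (pair_force a b al13 be13).
Local Notation F23 := (pair_force a b al23 be23).

Lemma Wpot_pairs (x1 x2 x3 : R) : W x1 x2 x3 = phi12 (x1 - x2) + phi13 (x1 - x3) + phi23 (x2 - x3).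
Proof. unfold Wpot, Upot, Vpot, pairpot, pair_pot. ring. Qed.

Lemma W_partial1 (x1 x2 x3 : R) : noncollision x1 x2 x3 ->
  derivable_pt_lim (fun x => W x x2 x3) x1 (F12 (x1 - x2) + F13 (x1 - x3)).
Proof.
  intros [H12 [H23 H13]].
  apply (derivable_pt_lim_ext (fun x => phi12 (x - x2) + phi13 (x - x3) + phi23 (x2 - x3)));
    [intros; rewrite Wpot_pairs; auto |].
  rewrite <- (Rplus_0_r (_ + _)).
  repeat apply derivable_pt_lim_add; try apply derivable_pt_lim_const; apply pair_pot_shift; lra.
Qed.

Lemma W_partial2 (x1 x2 x3 : R) : noncollision x1 x2 x3 ->
  derivable_pt_lim (fun x => W x1 x x3) x2 (- F12 (x1 - x2) + F23 (x2 - x3)).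
Proof.
  intros [H12 [H23 H13]].
  apply (derivable_pt_lim_ext (fun x => phi12 (x1 - x) + phi13 (x1 - x3) + phi23 (x - x3)));
    [intros; rewrite Wpot_pairs; auto |].
  replace (- F12 (x1 - x2) + F23 (x2 - x3)) with (- F12 (x1 - x2) + 0 + F23 (x2 - x3)) by ring.
  repeat apply derivable_pt_lim_add;
    [apply pair_pot_shift_rev | apply derivable_pt_lim_const | apply pair_pot_shift]; lra.
Qed.

Lemma W_partial3 (x1 x2 x3 : R) : noncollision x1 x2 x3 ->
  derivable_pt_lim (fun x => W x1 x2 x) x3 (- F13 (x1 - x3) - F23 (x2 - x3)).
Proof.
  intros [H12 [H23 H13]].
  apply (derivable_pt_lim_ext (fun x => phi12 (x1 - x2) + phi13 (x1 - x) + phi23 (x2 - x)));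
    [intros; rewrite Wpot_pairs; auto |].
  replace (- F13 (x1 - x3) - F23 (x2 - x3)) with (0 + - F13 (x1 - x3) + - F23 (x2 - x3)) by ring.
  repeat apply derivable_pt_lim_add;
    [apply derivable_pt_lim_const | apply pair_pot_shift_rev | apply pair_pot_shift_rev]; lra.
Qed.

Definition ham_field (u : nat -> R) (i : nat) : R :=
  match i with
  | 0%nat => u 3%nat / m1
  | 1%nat => u 4%nat / m2
  | 2%nat => u 5%nat / m3
  | 3%nat => - (F12 (u 0%nat - u 1%nat) + F13 (u 0%nat - u 2%nat))
  | 4%nat => - (- F12 (u 0%nat - u 1%nat) + F23 (u 1%nat - u 2%nat))
  | 5%nat => - (- F13 (u 0%nat - u 2%nat) - F23 (u 1%nat - u 2%nat))
  | _ => 0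
  end.

Lemma sol_at_state (q1 q2 q3 p1 p2 p3 : R -> R) (t : R) :
  sol_at m1 m2 m3 W q1 q2 q3 p1 p2 p3 t <->
  noncollision (q1 t) (q2 t) (q3 t) /\
  forall i, (i < 6)%nat -> derivable_pt_lim (fun s => state q1 q2 q3 p1 p2 p3 s i) t
                             (ham_field (state q1 q2 q3 p1 p2 p3 t) i).
Proof.
  split.
  - intros [Hnc [D1 [D2 [D3 [[v1 [V1 W1]] [[v2 [V2 W2]] [v3 [V3 W3]]]]]]]].
    split; [exact Hnc |].
    pose proof (uniqueness_limite _ _ _ _ W1 (W_partial1 _ _ _ Hnc)).
    pose proof (uniqueness_limite _ _ _ _ W2 (W_partial2 _ _ _ Hnc)).
    pose proof (uniqueness_limite _ _ _ _ W3 (W_partial3 _ _ _ Hnc)).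
    intros i Hi. destruct i as [|[|[|[|[|[|i]]]]]]; simpl; auto; [| | | lia];
      match goal with H : derivable_pt_lim ?p t ?v |- derivable_pt_lim ?p t ?w =>
        replace w with v by lra; exact H end.
  - intros [Hnc HD].
    pose proof (HD 0%nat ltac:(lia)) as D0. pose proof (HD 1%nat ltac:(lia)) as D1.
    pose proof (HD 2%nat ltac:(lia)) as D2. pose proof (HD 3%nat ltac:(lia)) as D3.
    pose proof (HD 4%nat ltac:(lia)) as D4. pose proof (HD 5%nat ltac:(lia)) as D5.
    simpl in D0, D1, D2, D3, D4, D5.
    split; [exact Hnc |]. split; [exact D0 |]. split; [exact D1 |]. split; [exact D2 |].
    split; [| split]; (eexists; split; [eassumption | rewrite Ropp_involutive]);
      [apply W_partial1 | apply W_partial2 | apply W_partial3]; exact Hnc.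
Qed.

Lemma ham_field_ext (u v : nat -> R) (i : nat) :
  (forall j, (j < 6)%nat -> u j = v j) -> ham_field u i = ham_field v i.
Proof. intros H. unfold ham_field. rewrite !H by lia. reflexivity. Qed.

Lemma vector_solution (Z : R -> nat -> R) (lo hi : R) :
  (forall t, lo < t < hi -> noncollision (Z t 0%nat) (Z t 1%nat) (Z t 2%nat) /\
     forall i, (i < 6)%nat -> derivable_pt_lim (fun s => Z s i) t (ham_field (Z t) i)) ->
  is_solution m1 m2 m3 W (fun s => Z s 0%nat) (fun s => Z s 1%nat) (fun s => Z s 2%nat)
    (fun s => Z s 3%nat) (fun s => Z s 4%nat) (fun s => Z s 5%nat) lo hi.
Proof.
  intros HZ t Ht.
  change (sol_at m1 m2 m3 W (fun s => Z s 0%nat) (fun s => Z s 1%nat) (fun s => Z s 2%nat)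
    (fun s => Z s 3%nat) (fun s => Z s 4%nat) (fun s => Z s 5%nat) t).
  apply sol_at_state. destruct (HZ t Ht) as [Hnc HD]. split; [exact Hnc |].
  intros i Hi.
  assert (E : forall u, ham_field (state (fun s => Z s 0%nat) (fun s => Z s 1%nat)
                (fun s => Z s 2%nat) (fun s => Z s 3%nat) (fun s => Z s 4%nat)
                (fun s => Z s 5%nat) u) i = ham_field (Z u) i).
  { intros u. apply ham_field_ext. intros j Hj. destruct j as [|[|[|[|[|[|j]]]]]]; auto; lia. }
  rewrite E. destruct i as [|[|[|[|[|[|i]]]]]]; try lia; apply HD; lia.
Qed.

Definition energy (q1 q2 q3 p1 p2 p3 : R -> R) (t : R) : R :=
  p1 t * p1 t / (2 * m1) + p2 t * p2 t / (2 * m2) + p3 t * p3 t / (2 * m3)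
  + W (q1 t) (q2 t) (q3 t).

Lemma energy_derivative (q1 q2 q3 p1 p2 p3 : R -> R) (t : R) :
  sol_at m1 m2 m3 W q1 q2 q3 p1 p2 p3 t ->
  derivable_pt_lim (energy q1 q2 q3 p1 p2 p3) t 0.
Proof.
  intros Hs. apply sol_at_state in Hs. destruct Hs as [[N12 [N23 N13]] HD].
  pose proof (HD 0%nat ltac:(lia)) as D0. pose proof (HD 1%nat ltac:(lia)) as D1.
  pose proof (HD 2%nat ltac:(lia)) as D2. pose proof (HD 3%nat ltac:(lia)) as D3.
  pose proof (HD 4%nat ltac:(lia)) as D4. pose proof (HD 5%nat ltac:(lia)) as D5.
  simpl in D0, D1, D2, D3, D4, D5.
  apply (derivable_pt_lim_ext (fun s =>
    p1 s * p1 s / (2 * m1) + p2 s * p2 s / (2 * m2) + p3 s * p3 s / (2 * m3)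
    + phi12 (q1 s - q2 s) + phi13 (q1 s - q3 s) + phi23 (q2 s - q3 s))).
  { intros s. unfold energy. rewrite Wpot_pairs. ring. }
  set (d12 := F12 (q1 t - q2 t)) in *.
  set (d13 := F13 (q1 t - q3 t)) in *.
  set (d23 := F23 (q2 t - q3 t)) in *.
  (* the kinetic and potential contributions cancel pairwise *)
  replace 0 with (2 * p1 t * (- (d12 + d13)) / (2 * m1) + 2 * p2 t * (- (- d12 + d23)) / (2 * m2)
     + 2 * p3 t * (- (- d13 - d23)) / (2 * m3)
     + d12 * (p1 t / m1 - p2 t / m2) + d13 * (p1 t / m1 - p3 t / m3)
     + d23 * (p2 t / m2 - p3 t / m3)) by (field; lra).
  repeat apply derivable_pt_lim_add; try (apply derivable_pt_lim_square_div; assumption);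
    unfold d12, d13, d23; apply pair_pot_chain; auto; lra.
Qed.

Lemma energy_conserved (q1 q2 q3 p1 p2 p3 : R -> R) (t0 t1 t t' : R) :
  is_solution m1 m2 m3 W q1 q2 q3 p1 p2 p3 t0 t1 -> t0 < t < t1 -> t0 < t' < t1 ->
  energy q1 q2 q3 p1 p2 p3 t = energy q1 q2 q3 p1 p2 p3 t'.
Proof.
  intros Hs. apply null_derivative_constant. intros c Hc. apply energy_derivative, Hs, Hc.
Qed.

Lemma kinetic_bound (p m K : R) : 0 < m -> p * p / (2 * m) <= K -> Rabs p <= 2 * m * K + 1.
Proof.
  intros Hm H. apply (Rmult_le_compat_l (2 * m)) in H; [| lra].
  replace (2 * m * (p * p / (2 * m))) with (p * p) in H by (field; lra).
  pose proof (Rabs_pos p). rewrite <- (Rabs_right (p * p)), Rabs_mult in H by nra. nra.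
Qed.

(* A priori bounds: along a solution on a bounded interval the energy is constant,
   every pair term is bounded below, hence every pair term and every kinetic term
   is bounded above.  The sublevel gap then keeps the bodies uniformly apart. *)
Lemma a_priori_bounds (q1 q2 q3 p1 p2 p3 : R -> R) (t0 t1 : R) :
  t0 < t1 -> is_solution m1 m2 m3 W q1 q2 q3 p1 p2 p3 t0 t1 ->
  exists del P, 0 < del /\
    forall t, t0 < t < t1 -> well_separated del P (state q1 q2 q3 p1 p2 p3 t).
Proof.
  intros Ht01 Hs.
  set (E0 := energy q1 q2 q3 p1 p2 p3 ((t0 + t1) / 2)).
  destruct (pair_pot_lower_bound a b al12 be12 Ha Hab Hal12 Hbe12) as [C12 [HC12 L12]].
  destruct (pair_pot_lower_bound a b al13 be13 Ha Hab Hal13 Hbe13) as [C13 [HC13 L13]].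
  destruct (pair_pot_lower_bound a b al23 be23 Ha Hab Hal23 Hbe23) as [C23 [HC23 L23]].
  set (K := E0 + C12 + C13 + C23).
  destruct (pair_pot_sublevel_gap a b al12 be12 Ha Hab Hal12 Hbe12 K) as [d12 [Hd12 G12]].
  destruct (pair_pot_sublevel_gap a b al13 be13 Ha Hab Hal13 Hbe13 K) as [d13 [Hd13 G13]].
  destruct (pair_pot_sublevel_gap a b al23 be23 Ha Hab Hal23 Hbe23 K) as [d23 [Hd23 G23]].
  exists (Rmin d12 (Rmin d13 d23)), (2 * (m1 + m2 + m3) * Rmax K 0 + 1).
  split; [repeat apply Rmin_pos; auto |].
  intros t Ht.
  assert (HE : energy q1 q2 q3 p1 p2 p3 t = E0)
    by (apply (energy_conserved _ _ _ _ _ _ t0 t1); auto; lra).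
  unfold energy in HE. rewrite Wpot_pairs in HE.
  destruct (Hs t Ht) as [[N12 [N23 N13]] _].
  pose proof (L12 (q1 t - q2 t) ltac:(lra)). pose proof (L13 (q1 t - q3 t) ltac:(lra)).
  pose proof (L23 (q2 t - q3 t) ltac:(lra)).
  assert (0 <= p1 t * p1 t / (2 * m1)) by (apply Rle_mult_inv_pos; nra).
  assert (0 <= p2 t * p2 t / (2 * m2)) by (apply Rle_mult_inv_pos; nra).
  assert (0 <= p3 t * p3 t / (2 * m3)) by (apply Rle_mult_inv_pos; nra).
  pose proof (Rmax_l K 0). pose proof (Rmax_r K 0).
  pose proof (Rmin_l d12 (Rmin d13 d23)). pose proof (Rmin_r d12 (Rmin d13 d23)).
  pose proof (Rmin_l d13 d23). pose proof (Rmin_r d13 d23).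
  assert (HP : forall p m, 0 < m <= m1 + m2 + m3 -> p * p / (2 * m) <= K ->
            Rabs p <= 2 * (m1 + m2 + m3) * Rmax K 0 + 1).
  { intros p m Hm Hp. pose proof (kinetic_bound p m K ltac:(lra) Hp).
    assert (m * K <= (m1 + m2 + m3) * Rmax K 0) by nra. lra. }
  unfold well_separated; simpl; repeat split.
  - pose proof (G12 (q1 t - q2 t) ltac:(lra) ltac:(unfold K; lra)). lra.
  - pose proof (G13 (q1 t - q3 t) ltac:(lra) ltac:(unfold K; lra)). lra.
  - pose proof (G23 (q2 t - q3 t) ltac:(lra) ltac:(unfold K; lra)). lra.
  - apply (HP _ m1); [lra | unfold K; lra].
  - apply (HP _ m2); [lra | unfold K; lra].
  - apply (HP _ m3); [lra | unfold K; lra].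
Qed.

Definition field_bound (r0 Q : R) : R :=
  Q * (/ m1 + / m2 + / m3)
  + 2 * (force_bound a b al12 be12 r0 + force_bound a b al13 be13 r0
         + force_bound a b al23 be23 r0).
Definition field_lipschitz (r0 : R) : R :=
  / m1 + / m2 + / m3
  + 2 * (force_lipschitz a b al12 be12 r0 + force_lipschitz a b al13 be13 r0
         + force_lipschitz a b al23 be23 r0).

Lemma field_lipschitz_nonneg (r0 : R) : 0 <= field_lipschitz r0.
Proof.
  unfold field_lipschitz.
  pose proof (force_lipschitz_nonneg a b al12 be12 Ha Hab Hal12 Hbe12 r0).
  pose proof (force_lipschitz_nonneg a b al13 be13 Ha Hab Hal13 Hbe13 r0).
  pose proof (force_lipschitz_nonneg a b al23 be23 Ha Hab Hal23 Hbe23 r0).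
  pose proof (Rinv_0_lt_compat m1 Hm1). pose proof (Rinv_0_lt_compat m2 Hm2).
  pose proof (Rinv_0_lt_compat m3 Hm3). lra.
Qed.

Lemma ham_field_bound (r0 Q : R) (u : nat -> R) : 0 < r0 -> well_separated r0 Q u ->
  forall i, (i < 6)%nat -> Rabs (ham_field u i) <= field_bound r0 Q.
Proof.
  intros Hr0 [G01 [G02 [G12 [P3 [P4 P5]]]]] i Hi.
  pose proof (pair_force_bound a b al12 be12 Ha Hab Hal12 Hbe12 r0 _ Hr0 G01) as D01.
  pose proof (pair_force_bound a b al13 be13 Ha Hab Hal13 Hbe13 r0 _ Hr0 G02) as D02.
  pose proof (pair_force_bound a b al23 be23 Ha Hab Hal23 Hbe23 r0 _ Hr0 G12) as D12.
  pose proof (force_bound_nonneg a b al12 be12 Ha Hab Hal12 Hbe12 r0).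
  pose proof (force_bound_nonneg a b al13 be13 Ha Hab Hal13 Hbe13 r0).
  pose proof (force_bound_nonneg a b al23 be23 Ha Hab Hal23 Hbe23 r0).
  assert (HQ : 0 <= Q) by (pose proof (Rabs_pos (u 3%nat)); lra).
  pose proof (Rinv_0_lt_compat m1 Hm1). pose proof (Rinv_0_lt_compat m2 Hm2).
  pose proof (Rinv_0_lt_compat m3 Hm3).
  assert (Hmom : forall p m, 0 < / m -> / m <= / m1 + / m2 + / m3 -> Rabs p <= Q ->
            Rabs (p / m) <= Q * (/ m1 + / m2 + / m3)).
  { intros p m Hm Hsum Hp. unfold Rdiv. rewrite Rabs_mult, (Rabs_right (/ m)) by lra.
    apply Rmult_le_compat; auto using Rabs_pos; lra. }
  assert (0 <= Q * (/ m1 + / m2 + / m3)) by (apply Rmult_le_pos; lra).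
  unfold field_bound. apply Rabs_le_between in D01, D02, D12.
  destruct i as [|[|[|[|[|[|i]]]]]]; simpl; try lia;
    [ apply (Rle_trans _ (Q * (/ m1 + / m2 + / m3))); [apply Hmom; auto; lra | lra] ..
    | apply Rabs_le; lra | apply Rabs_le; lra | apply Rabs_le; lra].
Qed.

Lemma ham_field_lipschitz (r0 : R) (u v : nat -> R) (B : R) : 0 < r0 ->
  same_side r0 (u 0%nat - u 1%nat) (v 0%nat - v 1%nat) ->
  same_side r0 (u 0%nat - u 2%nat) (v 0%nat - v 2%nat) ->
  same_side r0 (u 1%nat - u 2%nat) (v 1%nat - v 2%nat) ->
  (forall j, (j < 6)%nat -> Rabs (u j - v j) <= B) ->
  forall i, (i < 6)%nat -> Rabs (ham_field u i - ham_field v i) <= field_lipschitz r0 * B.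
Proof.
  intros Hr0 S01 S02 S12 HB i Hi.
  pose proof (pair_force_lipschitz a b al12 be12 Ha Hab Hal12 Hbe12 r0 _ _ Hr0 S01) as D01.
  pose proof (pair_force_lipschitz a b al13 be13 Ha Hab Hal13 Hbe13 r0 _ _ Hr0 S02) as D02.
  pose proof (pair_force_lipschitz a b al23 be23 Ha Hab Hal23 Hbe23 r0 _ _ Hr0 S12) as D12.
  pose proof (force_lipschitz_nonneg a b al12 be12 Ha Hab Hal12 Hbe12 r0).
  pose proof (force_lipschitz_nonneg a b al13 be13 Ha Hab Hal13 Hbe13 r0).
  pose proof (force_lipschitz_nonneg a b al23 be23 Ha Hab Hal23 Hbe23 r0).
  set (K12 := force_lipschitz a b al12 be12 r0) in *.
  set (K13 := force_lipschitz a b al13 be13 r0) in *.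
  set (K23 := force_lipschitz a b al23 be23 r0) in *.
  assert (HB0 : 0 <= B)
    by (specialize (HB 0%nat ltac:(lia)); pose proof (Rabs_pos (u 0%nat - v 0%nat)); lra).
  assert (Hdiff : forall j k, (j < 6)%nat -> (k < 6)%nat ->
            Rabs (u j - u k - (v j - v k)) <= 2 * B).
  { intros j k Hj Hk. pose proof (Rabs_le_between _ _ (HB j Hj)).
    pose proof (Rabs_le_between _ _ (HB k Hk)). apply Rabs_le; lra. }
  assert (F01 : K12 * Rabs (u 0%nat - u 1%nat - (v 0%nat - v 1%nat)) <= K12 * (2 * B))
    by (apply Rmult_le_compat_l; [lra | apply Hdiff; lia]).
  assert (F02 : K13 * Rabs (u 0%nat - u 2%nat - (v 0%nat - v 2%nat)) <= K13 * (2 * B))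
    by (apply Rmult_le_compat_l; [lra | apply Hdiff; lia]).
  assert (F12 : K23 * Rabs (u 1%nat - u 2%nat - (v 1%nat - v 2%nat)) <= K23 * (2 * B))
    by (apply Rmult_le_compat_l; [lra | apply Hdiff; lia]).
  apply Rabs_le_between in D01, D02, D12.
  pose proof (Rinv_0_lt_compat m1 Hm1). pose proof (Rinv_0_lt_compat m2 Hm2).
  pose proof (Rinv_0_lt_compat m3 Hm3).
  assert (Hmom : forall j m, (j < 6)%nat -> 0 < m -> / m <= / m1 + / m2 + / m3 ->
            Rabs (u j / m - v j / m) <= (/ m1 + / m2 + / m3) * B)
    by (intros; apply scaled_difference_bound; auto).
  assert (0 <= (/ m1 + / m2 + / m3) * B) by (apply Rmult_le_pos; lra).
  unfold field_lipschitz. fold K12 K13 K23.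
  destruct i as [|[|[|[|[|[|i]]]]]]; simpl; try lia;
    [ apply (Rle_trans _ ((/ m1 + / m2 + / m3) * B)); [apply Hmom; auto; lra | nra] ..
    | apply Rabs_le; nra | apply Rabs_le; nra | apply Rabs_le; nra].
Qed.

Definition ball_bound (del P : R) : R := field_bound (del / 2) (P + del / 4).
Definition ball_lipschitz (del : R) : R := field_lipschitz (del / 2).

Lemma ham_field_bound_ball (y0 u : nat -> R) (del P : R) : 0 < del ->
  well_separated del P y0 -> in_ball y0 (del / 4) u ->
  forall i, (i < 6)%nat -> Rabs (ham_field u i) <= ball_bound del P.
Proof.
  intros Hd Hy0 Hu. apply ham_field_bound; [lra |]. apply (ball_well_separated y0); auto.
Qed.

Lemma ham_field_lipschitz_ball (y0 u v : nat -> R) (del P B : R) : 0 < del ->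
  well_separated del P y0 -> in_ball y0 (del / 4) u -> in_ball y0 (del / 4) v ->
  (forall j, (j < 6)%nat -> Rabs (u j - v j) <= B) ->
  forall i, (i < 6)%nat -> Rabs (ham_field u i - ham_field v i) <= ball_lipschitz del * B.
Proof.
  intros Hd Hy0 Hu Hv.
  destruct (ball_same_side y0 u v del P Hd Hy0 Hu Hv) as [S01 [S02 S12]].
  apply ham_field_lipschitz; auto; lra.
Qed.

(* A time step, depending only on (del, P), on which solutions issued from
   del-separated states with momenta <= P exist and are unique. *)
Definition step (del P : R) : R :=
  Rmin (del / 4 / (ball_bound del P + 1)) (/ (2 * (ball_lipschitz del + 1))).

Lemma step_spec (del P : R) : 0 < del -> 0 <= ball_bound del P ->
  0 < step del P /\ step del P * ball_bound del P <= del / 4 /\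
  ball_lipschitz del * step del P <= / 2.
Proof.
  intros Hd HM.
  pose proof (field_lipschitz_nonneg (del / 2)) as HL. fold (ball_lipschitz del) in HL.
  unfold step. set (M := ball_bound del P) in *. set (L := ball_lipschitz del) in *.
  pose proof (Rmin_l (del / 4 / (M + 1)) (/ (2 * (L + 1)))).
  pose proof (Rmin_r (del / 4 / (M + 1)) (/ (2 * (L + 1)))).
  set (h := Rmin (del / 4 / (M + 1)) (/ (2 * (L + 1)))) in *.
  assert (H1 : 0 < del / 4 / (M + 1)) by (apply Rdiv_lt_0_compat; lra).
  assert (H2 : 0 < / (2 * (L + 1))) by (apply Rinv_0_lt_compat; lra).
  split; [apply Rmin_pos; auto |]. split.
  - assert (h * M <= del / 4 / (M + 1) * M) by (apply Rmult_le_compat_r; lra).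
    replace (del / 4 / (M + 1) * M) with (del / 4 - del / 4 / (M + 1)) in H3 by (field; lra). lra.
  - assert (L * h <= L * / (2 * (L + 1))) by (apply Rmult_le_compat_l; lra).
    replace (L * / (2 * (L + 1))) with (/ 2 - / (2 * (L + 1))) in H3 by (field; lra). lra.
Qed.

Lemma ball_bound_nonneg (del P : R) (y0 : nat -> R) : 0 < del -> well_separated del P y0 ->
  0 <= ball_bound del P.
Proof.
  intros Hd Hy0. eapply Rle_trans; [apply Rabs_pos |].
  apply (ham_field_bound_ball y0 y0 del P Hd Hy0 (in_ball_center y0 (del / 4) ltac:(lra)) 0%nat).
  lia.
Qed.

(* Local existence near a del-separated state: Picard-Lindelof applied to the
   field composed with the projection onto the ball of radius del/4, whose
   solution never leaves that ball and hence solves the true system. *)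
Lemma local_solution (y0 : nat -> R) (del P s : R) : 0 < del -> well_separated del P y0 ->
  exists z : R -> nat -> R, (forall i, (i < 6)%nat -> z s i = y0 i) /\
    forall t, s - step del P < t < s + step del P ->
      in_ball y0 (del / 4) (z t) /\
      forall i, (i < 6)%nat -> derivable_pt_lim (fun x => z x i) t (ham_field (z t) i).
Proof.
  intros Hd Hy0.
  pose proof (ball_bound_nonneg del P y0 Hd Hy0) as HM.
  pose proof (field_lipschitz_nonneg (del / 2)) as HL. fold (ball_lipschitz del) in HL.
  destruct (step_spec del P Hd HM) as [Hh [HhM HLh]].
  set (rho := del / 4) in *. set (M := ball_bound del P) in *. set (L := ball_lipschitz del) in *.
  set (h := step del P) in *.
  set (G := fun u i => ham_field (ball_proj y0 rho u) i).
  assert (Hproj : forall u, in_ball y0 rho (ball_proj y0 rho u))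
    by (intros; apply ball_proj_in; unfold rho; lra).
  assert (HGbd : forall u i, (i < 6)%nat -> Rabs (G u i) <= M).
  { intros u i Hi. apply (ham_field_bound_ball y0); auto. }
  assert (HGlip : lipschitz_field 6 G L).
  { intros u v B HB i Hi. apply (ham_field_lipschitz_ball y0 _ _ del P); auto.
    intros j Hj. eapply Rle_trans; [apply ball_proj_dist; unfold rho; lra | apply HB, Hj]. }
  destruct (picard_lindelof 6 G L M y0 s h Hh HL HM HLh HGlip HGbd) as [z [Hz0 Hzd]].
  assert (Zball : forall t, s - h < t < s + h -> in_ball y0 rho (z t)).
  { intros t Ht j Hj. rewrite <- (Hz0 j Hj).
    eapply Rle_trans.
    { apply (mean_value_bound (fun x => z x j) (fun x => G (z x) j) (Rmin s t) (Rmax s t) s t M).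
      - split; [apply Rmin_l | apply Rmax_l].
      - split; [apply Rmin_r | apply Rmax_r].
      - intros c Hc. apply Hzd; auto. unfold Rmin, Rmax in Hc; destruct (Rle_dec s t); lra.
      - intros c _. apply HGbd, Hj. }
    assert (Rabs (t - s) <= h) by (apply Rabs_le; lra).
    assert (M * Rabs (t - s) <= M * h) by (apply Rmult_le_compat_l; lra). lra. }
  exists z. split; [exact Hz0 |]. intros t Ht. split; [apply Zball, Ht |].
  intros i Hi. replace (ham_field (z t) i) with (G (z t) i); [apply Hzd; auto |].
  apply ham_field_ext. intros j Hj. apply ball_proj_id, Zball; auto.
Qed.

Lemma solution_state_derivative (q1 q2 q3 p1 p2 p3 : R -> R) (t0 t1 c : R) (j : nat) :
  is_solution m1 m2 m3 W q1 q2 q3 p1 p2 p3 t0 t1 -> t0 < c < t1 -> (j < 6)%nat ->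
  derivable_pt_lim (fun x => state q1 q2 q3 p1 p2 p3 x j) c
    (ham_field (state q1 q2 q3 p1 p2 p3 c) j).
Proof. intros Hs Hc Hj. exact (proj2 (proj1 (sol_at_state _ _ _ _ _ _ c) (Hs c Hc)) j Hj). Qed.

Lemma solution_stays_in_ball (q1 q2 q3 p1 p2 p3 : R -> R) (t0 t1 del P s : R) :
  is_solution m1 m2 m3 W q1 q2 q3 p1 p2 p3 t0 t1 -> 0 < del ->
  (forall t, t0 < t < t1 -> well_separated del P (state q1 q2 q3 p1 p2 p3 t)) -> t0 < s ->
  forall t, s <= t < t1 -> t - s <= step del P ->
    in_ball (state q1 q2 q3 p1 p2 p3 s) (del / 4) (state q1 q2 q3 p1 p2 p3 t).
Proof.
  intros Hs Hd Hbd Hs0 t Ht Hst j Hj. set (Y := state q1 q2 q3 p1 p2 p3) in *.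
  pose proof (ball_bound_nonneg del P _ Hd (Hbd s ltac:(lra))) as HM.
  destruct (step_spec del P Hd HM) as [_ [HhM _]].
  eapply Rle_trans.
  { apply (mean_value_bound (fun x => Y x j) (fun x => ham_field (Y x) j) s t s t
             (ball_bound del P)); try lra.
    - intros c Hc. apply (solution_state_derivative _ _ _ _ _ _ t0 t1); auto; lra.
    - intros c Hc. apply (ham_field_bound_ball (Y c) (Y c) del P); auto;
        [apply Hbd; lra | apply in_ball_center; lra]. }
  rewrite Rabs_right by lra.
  assert (ball_bound del P * (t - s) <= ball_bound del P * step del P)
    by (apply Rmult_le_compat_l; lra).
  lra.
Qed.

Lemma solution_agrees_with_local (q1 q2 q3 p1 p2 p3 : R -> R) (t0 t1 del P s : R)
    (z : R -> nat -> R) :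
  is_solution m1 m2 m3 W q1 q2 q3 p1 p2 p3 t0 t1 -> 0 < del ->
  (forall t, t0 < t < t1 -> well_separated del P (state q1 q2 q3 p1 p2 p3 t)) ->
  t0 < s < t1 -> t1 - s <= step del P / 2 ->
  (forall i, (i < 6)%nat -> z s i = state q1 q2 q3 p1 p2 p3 s i) ->
  (forall t, s - step del P < t < s + step del P ->
     in_ball (state q1 q2 q3 p1 p2 p3 s) (del / 4) (z t) /\
     forall i, (i < 6)%nat -> derivable_pt_lim (fun x => z x i) t (ham_field (z t) i)) ->
  forall t j, s <= t < t1 -> (j < 6)%nat -> state q1 q2 q3 p1 p2 p3 t j = z t j.
Proof.
  intros Hs Hd Hbd Hs1 Hs2 Hz0 Hz t j Ht Hj. set (Y := state q1 q2 q3 p1 p2 p3) in *.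
  pose proof (ball_bound_nonneg del P _ Hd (Hbd s Hs1)) as HM.
  pose proof (field_lipschitz_nonneg (del / 2)) as HL. fold (ball_lipschitz del) in HL.
  destruct (step_spec del P Hd HM) as [Hh [_ HLh]].
  assert (Yball : forall c, s <= c < t1 -> in_ball (Y s) (del / 4) (Y c))
    by (intros c Hc; apply (solution_stays_in_ball _ _ _ _ _ _ t0 t1 del P); auto; lra).
  assert (HLe : ball_lipschitz del * (t1 - s) <= / 2).
  { assert (ball_lipschitz del * (t1 - s) <= ball_lipschitz del * step del P)
      by (apply Rmult_le_compat_l; lra). lra. }
  apply (ode_uniqueness 6 ham_field Y z (ball_lipschitz del) (del / 2) s (t1 - s) HL HLe);
    auto; try lra.
  - intros c Hc j' Hj'. split; [apply (solution_state_derivative _ _ _ _ _ _ t0 t1) | apply Hz];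
      auto; lra.
  - intros c Hc B HB i Hi.
    apply (ham_field_lipschitz_ball (Y s) (Y c) (z c) del P B Hd (Hbd s Hs1)); auto;
      [apply Yball | apply Hz]; lra.
  - intros c Hc j' Hj'. pose proof (Rabs_le_between _ _ (Yball c ltac:(lra) j' Hj')).
    pose proof (Rabs_le_between _ _ (proj1 (Hz c ltac:(lra)) j' Hj')). apply Rabs_le; lra.
  - intros j' Hj'. symmetry. apply Hz0, Hj'.
Qed.

(* By the a priori bounds its states are uniformly del-separated, so the local
   solution issued from its state at a time s within half a step of t1 lives
   beyond t1, and by uniqueness it continues the given solution. *)
Lemma forward_extension (q1 q2 q3 p1 p2 p3 : R -> R) (t0 t1 : R) :
  t0 < t1 -> is_solution m1 m2 m3 W q1 q2 q3 p1 p2 p3 t0 t1 ->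
  exists d, 0 < d /\
    exists q1' q2' q3' p1' p2' p3' : R -> R,
      is_solution m1 m2 m3 W q1' q2' q3' p1' p2' p3' t0 (t1 + d) /\
      agree_on q1 q2 q3 p1 p2 p3 q1' q2' q3' p1' p2' p3' t0 t1.
Proof.
  intros Ht01 Hs.
  destruct (a_priori_bounds q1 q2 q3 p1 p2 p3 t0 t1 Ht01 Hs) as [del [P [Hd Hbd]]].
  set (Y := state q1 q2 q3 p1 p2 p3) in *.
  pose proof (ball_bound_nonneg del P _ Hd (Hbd ((t0 + t1) / 2) ltac:(lra))) as HM.
  destruct (step_spec del P Hd HM) as [Hh _].
  set (h := step del P) in *.
  set (s := Rmax ((t0 + t1) / 2) (t1 - h / 2)).
  assert (Hs1 : t0 < s < t1) by (unfold s, Rmax; destruct Rle_dec; lra).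
  assert (Hs2 : t1 - s <= h / 2) by (unfold s, Rmax; destruct Rle_dec; lra).
  destruct (local_solution (Y s) del P s Hd (Hbd s Hs1)) as [z [Hz0 Hz]]. fold h in Hz.
  pose proof (solution_agrees_with_local _ _ _ _ _ _ t0 t1 del P s z Hs Hd Hbd Hs1 Hs2 Hz0 Hz)
    as Yz.
  set (zc := fun (j : nat) (x : R) => z x j).
  assert (Hzsol : is_solution m1 m2 m3 W (zc 0%nat) (zc 1%nat) (zc 2%nat)
                    (zc 3%nat) (zc 4%nat) (zc 5%nat) s (s + h)).
  { apply vector_solution. intros t Ht. destruct (Hz t ltac:(lra)) as [Hball Hder].
    split; [| exact Hder].
    apply (well_separated_noncollision (del / 2) (P + del / 4)); [lra |].
    apply (ball_well_separated (Y s)); auto. }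
  assert (Hover : agree_on (zc 0%nat) (zc 1%nat) (zc 2%nat) (zc 3%nat) (zc 4%nat) (zc 5%nat)
                    q1 q2 q3 p1 p2 p3 s t1).
  { intros t Ht. pose proof (fun j Hj => Yz t j ltac:(lra) Hj) as E.
    repeat split; [exact (E 0%nat ltac:(lia)) | exact (E 1%nat ltac:(lia))
                  | exact (E 2%nat ltac:(lia)) | exact (E 3%nat ltac:(lia))
                  | exact (E 4%nat ltac:(lia)) | exact (E 5%nat ltac:(lia))]. }
  destruct (solution_splice m1 m2 m3 W q1 q2 q3 p1 p2 p3 _ _ _ _ _ _ t0 t1 s (s + h)
              ltac:(lra) ltac:(lra) Hs Hzsol Hover) as [Hsol Hagree].
  exists (s + h - t1). split; [lra |].
  replace (t1 + (s + h - t1)) with (s + h) by ring.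
  do 6 eexists. split; [exact Hsol | exact Hagree].
Qed.

Lemma backward_extension (q1 q2 q3 p1 p2 p3 : R -> R) (t0 t1 : R) :
  t0 < t1 -> is_solution m1 m2 m3 W q1 q2 q3 p1 p2 p3 t0 t1 ->
  exists d, 0 < d /\
    exists q1' q2' q3' p1' p2' p3' : R -> R,
      is_solution m1 m2 m3 W q1' q2' q3' p1' p2' p3' (t0 - d) t1 /\
      agree_on q1 q2 q3 p1 p2 p3 q1' q2' q3' p1' p2' p3' t0 t1.
Proof.
  intros Ht01 Hs.
  destruct (forward_extension _ _ _ _ _ _ (- t1) (- t0) ltac:(lra)
              (solution_time_reversal _ _ _ _ _ _ _ _ _ _ _ _ Hs))
    as [d [Hd [Q1 [Q2 [Q3 [P1 [P2 [P3 [HQ HA]]]]]]]]].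
  exists d. split; [exact Hd |].
  exists (fun t => Q1 (- t)), (fun t => Q2 (- t)), (fun t => Q3 (- t)),
         (fun t => - P1 (- t)), (fun t => - P2 (- t)), (fun t => - P3 (- t)).
  split.
  - intros t Ht. apply (solution_time_reversal _ _ _ _ _ _ _ _ _ _ _ _ HQ). lra.
  - intros t Ht. destruct (HA (- t) ltac:(lra)) as [E1 [E2 [E3 [E4 [E5 E6]]]]].
    rewrite Ropp_involutive in E1, E2, E3, E4, E5, E6.
    cbv beta. rewrite E1, E2, E3, E4, E5, E6. repeat split; ring.
Qed.

End ThreeBody.

(* No solution is maximal on a bounded interval, in either time direction. *)
Theorem mainTheorem1 :
  forall (m1 m2 m3 al12 al13 al23 be12 be13 be23 a b : R),
    0 < m1 -> 0 < m2 -> 0 < m3 ->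
    0 < al12 -> 0 < al13 -> 0 < al23 ->
    0 < be12 -> 0 < be13 -> 0 < be23 ->
    4 < a -> a < b - 1 ->
    forall (q1 q2 q3 p1 p2 p3 : R -> R) (t0 t1 : R),
      t0 < t1 ->
      is_solution m1 m2 m3 (Wpot al12 al13 al23 a be12 be13 be23 b)
        q1 q2 q3 p1 p2 p3 t0 t1 ->
      (* forward: no solution on a bounded interval is maximal at t1 *)
      (exists d, 0 < d /\
         exists q1' q2' q3' p1' p2' p3' : R -> R,
           is_solution m1 m2 m3 (Wpot al12 al13 al23 a be12 be13 be23 b)
             q1' q2' q3' p1' p2' p3' t0 (t1 + d) /\
           agree_on q1 q2 q3 p1 p2 p3 q1' q2' q3' p1' p2' p3' t0 t1) /\
      (* backward: likewise at t0 *)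
      (exists d, 0 < d /\
         exists q1' q2' q3' p1' p2' p3' : R -> R,
           is_solution m1 m2 m3 (Wpot al12 al13 al23 a be12 be13 be23 b)
             q1' q2' q3' p1' p2' p3' (t0 - d) t1 /\
           agree_on q1 q2 q3 p1 p2 p3 q1' q2' q3' p1' p2' p3' t0 t1).
Proof.
  intros m1 m2 m3 al12 al13 al23 be12 be13 be23 a b Hm1 Hm2 Hm3 Hal12 Hal13 Hal23
    Hbe12 Hbe13 Hbe23 Ha Hab q1 q2 q3 p1 p2 p3 t0 t1 Ht01 Hs.
  assert (Ha0 : 0 < a) by lra. assert (Hab' : a < b) by lra.
  split; [apply forward_extension | apply backward_extension]; auto.
Qed.
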